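(* Let $f:X\to\mathcal G$ be convex and $x_0\in\operatorname{dom} f$. If $x_0$ solves the scalarized Stampacchia inequality, i.e. $f(x_0)=Z$ or for all $x\in\operatorname{dom}f$ with $f(x)\ne f(x_0)$ there exists $z^*\in C^-\setminus\{0\}$ with $0<\varphi'_{f,z^*}(x_0,x-x_0)$, then it solves the set-valued Stampacchia inequality, i.e. $f(x_0)=Z$ or for all $x\in\operatorname{dom} f$ with $f(x)\neq f(x_0)$ one has $0\notin f'(x_0,x-x_0)$. If additionally the weak regularity condition $f'(x,u)=\bigcap_{z^*\in C^-\setminus\{0\}}f'_{z^*}(x,u)$ holds for all $x,u\in X$, then $x_0$ solves the set-valued Stampacchia inequality if and only if it solves the scalarized one.
   Context: $X$ real linear space, $Z$ real locally convex Hausdorff space with dual $Z^*$, $C\subseteq Z$ closed convex cone, $0\in C$, $C^-=\{z^*:z^*(c)\le0\ \forall c\in C\}$, $C^-\setminus\{0\}\ne\emptyset$. $\mathcal G=\{A\subseteq Z:A=\operatorname{cl}\operatorname{co}(A+C)\}$; $A\oplus B=\operatorname{cl}\{a+b\}$, $tA=\{ta\}$ ($t>0$), $A\ominus B=\{z:B+\{z\}\subseteq A\}$. $f$ convex: $f(tx_1+(1-t)x_2)\supseteq tf(x_1)\oplus(1-t)f(x_2)$; $\operatorname{dom}f=\{x:f(x)\ne\emptyset\}$. For $g:X\to\mathcal G$, $g'(x,u)=\bigcap_{t_0>0}\operatorname{cl}\operatorname{co}\bigcup_{0<t<t_0}\frac1t(g(x+tu)\ominus g(x))$. On $\overline{\mathbb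 R}$: inf-addition $\dot+$ ($(-\infty)\dot+(+\infty)=+\infty$), $r\ominus s=\inf\{t\in\mathbb R:r\le s\dot+t\}$ ($\inf\emptyset=+\infty$). $\varphi_{f,z^*}(x)=\inf\{-z^*(z):z\in f(x)\}$ ($+\infty$ if $f(x)=\emptyset$), $\varphi'_{f,z^*}(x,u)=\inf_{t>0}\frac1t(\varphi_{f,z^*}(x+tu)\ominus\varphi_{f,z^*}(x))$. $f_{z^*}(x)=\{z:\varphi_{f,z^*}(x)\le -z^*(z)\}$, $f'_{z^*}$ its directional derivative. *)

From HB Require Import structures.
From mathcomp Require Import all_boot all_order all_algebra.
From mathcomp Require Import all_classical all_reals all_analysis.
Set Implicit Arguments. Unset Strict Implicit. Unset Printing Implicit Defensive.
Import Order.TTheory GRing.Theory Num.Theory.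
Local Open Scope classical_set_scope.
Local Open Scope ring_scope.

Section Defs.
Variable R : realType.

Section LinSets.
Variable Z : lmodType R.

Definition msum (A B : set Z) : set Z :=
  [set z | exists a b, A a /\ B b /\ z = a + b].

Definition mscale (t : R) (A : set Z) : set Z := [set t *: a | a in A].

Definition mdiff (A B : set Z) : set Z := [set z | forall b, B b -> A (b + z)].

Definition conv_hull (A : set Z) : set Z :=
  \bigcap_(B in [set B : set Z | convex_set (B : set (convex_lmodType Z)) /\
                                 A `<=` B]) B.
End LinSets.

Section TvsSets.
Variable Z : tvsType R.

Definition clco (A : set Z) : set Z := closure (conv_hull A).

Definition oplus (A B : set Z) : set Z := closure (msum A B).

Definition inG (C A : set Z) : Prop := A = clco (msum A C).

Definition is_dual (zs : Z -> R) : Prop :=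
  linear_for *%R zs /\ continuous (zs : Z -> R^o).

Definition negdual_nz (C : set Z) : set (Z -> R) :=
  [set zs | is_dual zs /\ (forall c, C c -> zs c <= 0) /\ zs <> (fun _ => 0)].

Definition closed_convex_cone (C : set Z) : Prop :=
  closed C /\ convex_set (C : set (convex_lmodType Z)) /\
  (forall (t : R) c, 0 < t -> C c -> C (t *: c)).

Section Fun.
Variable X : lmodType R.

Definition set_convex (f : X -> set Z) : Prop :=
  forall x1 x2 (t : R), 0 < t < 1 ->
    oplus (mscale t (f x1)) (mscale (1 - t) (f x2)) `<=`
    f (t *: x1 + (1 - t) *: x2).

Definition dom (f : X -> set Z) : set X := [set x | f x <> set0].

Definition sdir (g : X -> set Z) (x u : X) : set Z :=
  \bigcap_(t0 in [set t0 : R | 0 < t0])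
     clco (\bigcup_(t in [set t : R | 0 < t < t0])
             mscale t^-1 (mdiff (g (x + t *: u)) (g x))).

(* inf-addition on the extended reals: (-oo) .+ (+oo) = +oo *)
Definition iadd (a b : \bar R) : \bar R :=
  match a, b with
  | +oo%E, _ => +oo%E
  | _, +oo%E => +oo%E
  | -oo%E, _ => -oo%E
  | _, -oo%E => -oo%E
  | (r%:E)%E, (s%:E)%E => ((r + s)%:E)%E
  end.

Definition ediff (r s : \bar R) : \bar R :=
  ereal_inf [set (t%:E)%E | t in [set t : R | (r <= iadd s (t%:E))%E]].

(* phi_{f,z*}(x) = inf {-z*(z) : z in f(x)} (= +oo if f(x) empty) *)
Definition phi (f : X -> set Z) (zs : Z -> R) (x : X) : \bar R :=
  ereal_inf [set ((- zs z)%:E)%E | z in f x].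

Definition phi_dir (f : X -> set Z) (zs : Z -> R) (x u : X) : \bar R :=
  ereal_inf [set ((t^-1)%:E * ediff (phi f zs (x + t *: u)) (phi f zs x))%E
            | t in [set t : R | 0 < t]].

Definition fscal (f : X -> set Z) (zs : Z -> R) (x : X) : set Z :=
  [set z | (phi f zs x <= (- zs z)%:E)%E].

Definition scalar_stampacchia (C : set Z) (f : X -> set Z) (x0 : X) : Prop :=
  f x0 = setT \/
  forall x, dom f x -> f x <> f x0 ->
    exists2 zs, negdual_nz C zs & (0 < phi_dir f zs x0 (x - x0))%E.

Definition setvalued_stampacchia (f : X -> set Z) (x0 : X) : Prop :=
  f x0 = setT \/
  forall x, dom f x -> f x <> f x0 -> ~ sdir f x0 (x - x0) 0.

Definition weak_regular (C : set Z) (f : X -> set Z) : Prop :=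
  forall x u, sdir f x u =
    \bigcap_(zs in negdual_nz C) sdir (fscal f zs) x u.
End Fun.
End TvsSets.
End Defs.

From Pilot Require Import Defs.
From HB Require Import structures.
From mathcomp Require Import all_boot all_order all_algebra.
From mathcomp Require Import all_classical all_reals all_analysis.
From mathcomp Require Import ring lra.
Set Implicit Arguments. Unset Strict Implicit. Unset Printing Implicit Defensive.
Import Order.TTheory GRing.Theory Num.Theory.
Local Open Scope classical_set_scope.
Local Open Scope ring_scope.

(* Fix z* in C^- \ {0}.  Every element z of a set-valued difference quotient
   (1/t)(f(x+tu) ominus f(x)) satisfies phi'(x,u) <= -z*(z); this half-space is
   closed and convex, hence contains f'(x,u), and z = 0 gives the first claim.
   Conversely, convexity of f makes the scalar difference quotients of phi
   nondecreasing in t, so if phi'(x,u) <= 0 every z with -z*(z) > 0 lies in a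
   quotient of f_{z*} for arbitrarily small t.  As 0 is in the closure of this
   open half-space, 0 is in f_{z*}'(x,u) for every such z*, which by weak
   regularity means 0 is in f'(x,u). *)

Section Stampacchia.
Variable R : realType.
Variable X : lmodType R.
Variable Z : tvsType R.
Implicit Types (zs : Z -> R) (f : X -> set Z).

Lemma dualD zs : is_dual zs -> {morph zs : u v / u + v}.
Proof. by case=> zs_lin _ u v; rewrite -[u in LHS]scale1r zs_lin mul1r. Qed.

Lemma dual0 zs : is_dual zs -> zs 0 = 0.
Proof. by move=> /dualD zsD; apply: (@addrI _ (zs 0)); rewrite -zsD !addr0. Qed.

Lemma dualZ zs : is_dual zs -> forall a u, zs (a *: u) = a * zs u.
Proof.
by move=> hd a u; rewrite -[a *: u]addr0 hd.1 dual0 // addr0.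
Qed.

Lemma closed_halfspace zs (p : \bar R) : is_dual zs ->
  closed [set z | (p <= (- zs z)%:E)%E].
Proof.
move=> hd; case: p => [r||].
- have -> : [set z | (r%:E <= (- zs z)%:E)%E] = zs @^-1` [set y | y <= - r].
    by apply/seteqP; split => y /=; rewrite lee_fin lerNr.
  apply: (@preimage_closed _ R^o); last exact: closed_le.
  by move=> y _; exact: hd.2 y.
- have -> : [set z | (+oo <= (- zs z)%:E)%E] = set0 by apply/seteqP; split.
  exact: closed0.
- have -> : [set z | (-oo <= (- zs z)%:E)%E] = setT.
    by apply/seteqP; split => y //= _; rewrite leNye.
  exact: closedT.
Qed.

Lemma convex_halfspace zs (p : \bar R) : is_dual zs ->
  convex_set ([set z | (p <= (- zs z)%:E)%E] : set (convex_lmodType Z)).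
Proof.
move=> hd z1 z2 l; rewrite !inE /= dualD // !dualZ //.
have l0 : 0 <= l%:num by [].
have l1 : l%:num <= 1 by [].
case: p => [r||] //= h1 h2; last by rewrite leNye.
rewrite lee_fin; rewrite !lee_fin in h1 h2; rewrite /unstable.onem; nra.
Qed.

Lemma clco_sub (A S : set Z) : closed S ->
  convex_set (S : set (convex_lmodType Z)) -> A `<=` S -> clco A `<=` S.
Proof.
move=> /closure_id S_closed S_convex AS; rewrite S_closed; apply: closureS.
by move=> y; apply; split.
Qed.

Lemma closure_open_halfspace0 zs : is_dual zs -> zs <> (fun=> 0) ->
  closure [set z | 0 < - zs z] 0.
Proof.
move=> hd zs_nz.
have [v zs_v] : exists v, zs v != 0.
  apply: contrapT => hn; apply: zs_nz; apply/funext => v; apply/eqP.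
  by apply: contrapT => hv; apply: hn; exists v; apply/negP.
pose w := (- zs v)^-1 *: v.
have zs_w : - zs w = 1 by rewrite /w dualZ // invrN mulNr opprK mulVf.
have w_cont : {for (0 : R^o), continuous (fun k : R^o => k *: w)}.
  apply: (@continuous_comp _ _ _ (fun k : R^o => (k, w))
                                 (fun z : R^o * Z => z.1 *: z.2)).
    exact: (cvg_pair cvg_id (cvg_cst w)).
  exact: scale_continuous.
move=> B hB; have := w_cont B; rewrite scale0r => /(_ hB) /nbhs_ballP[e e0 he].
exists ((e / 2) *: w); split.
  by rewrite /= dualZ // -mulrN zs_w mulr1 divr_gt0.
apply: he; rewrite /ball /= sub0r normrN gtr0_norm ?divr_gt0 //.
by rewrite /= in e0; lra.
Qed.

Local Open Scope ereal_scope.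

Lemma iaddE (s : \bar R) (t : R) : iadd s t%:E = s + t%:E.
Proof. by case: s. Qed.

Lemma ediff_le (r s : \bar R) (t : R) : r <= s + t%:E -> ediff r s <= t%:E.
Proof. by rewrite -iaddE => h; apply: ereal_inf_lbound; exists t. Qed.

Lemma ediff_lt (r s : \bar R) (c : R) : ediff r s < c%:E ->
  exists2 t : R, (t < c)%R & r <= s + t%:E.
Proof.
by case/ereal_inf_lt => _ [t /= h <-]; rewrite lte_fin => tc; exists t; rewrite -?iaddE.
Qed.

Lemma lte_invMl (t : R) (e : \bar R) (c : R) : (0 < t)%R ->
  (t^-1)%R%:E * e < c%:E -> e < (t * c)%:E.
Proof.
move=> t0; case: e => [r||] //=.
- by rewrite -EFinM !lte_fin -ltr_pdivrMl.
- by rewrite gt0_muley ?lte_fin ?invr_gt0.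
- by rewrite ltNyr.
Qed.

Definition phi_dquot f zs (x u : X) (t : R) :=
  (t^-1)%R%:E * ediff (phi f zs (x + t *: u)%R) (phi f zs x).

Definition sdquot f (x u : X) (t : R) :=
  Defs.mscale (t^-1)%R (mdiff (f (x + t *: u)%R) (f x)).

Lemma phi_le_shift f zs x y w : is_dual zs ->
  (forall b, f x b -> f y (b + w)%R) -> phi f zs y <= phi f zs x + (- zs w)%:E.
Proof.
move=> hd hb; rewrite -leeBlDr //; apply: le_ereal_inf_tmp => _ [b fb <-].
rewrite leeBlDr // -EFinD; apply: ereal_inf_lbound; exists (b + w)%R; first exact: hb.
by rewrite dualD // opprD.
Qed.

Lemma phi_dir_le_sdquot f zs x u (t : R) z : is_dual zs -> (0 < t)%R ->
  sdquot f x u t z -> phi_dir f zs x u <= (- zs z)%:E.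
Proof.
move=> hd t0 [w hw <-]; apply: (@le_trans _ _ (phi_dquot f zs x u t)).
  by apply: ereal_inf_lbound; exists t.
rewrite dualZ // -mulrN EFinM; apply: lee_wpmul2l.
  by rewrite lee_fin invr_ge0 ltW.
by apply: ediff_le; apply: phi_le_shift => // b /hw.
Qed.

Lemma phi_dir_le_sdir f zs x u z : is_dual zs -> sdir f x u z ->
  phi_dir f zs x u <= (- zs z)%:E.
Proof.
move=> hd /(_ 1%R ltr01).
apply: (@clco_sub _ [set z | phi_dir f zs x u <= (- zs z)%:E]).
- exact: closed_halfspace.
- exact: convex_halfspace.
- by move=> y [t /andP[t0 _] y_t]; exact: phi_dir_le_sdquot y_t.
Qed.

(* The slack a' > a lets us pick, for each b in f x, some c in f y with
   - zs c < - zs b + a'; then l c + (1 - l) b is a point of the left-hand set. *)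
Lemma phi_convex_shift f zs x y (l a a' : R) : set_convex f -> is_dual zs ->
  (0 < l < 1)%R -> (a < a')%R -> phi f zs y <= phi f zs x + a%:E ->
  phi f zs (l *: y + (1 - l) *: x) <= phi f zs x + (l * a')%:E.
Proof.
move=> f_convex hd /andP[l0 l1] aa' phi_y.
rewrite -leeBlDr //; apply: le_ereal_inf_tmp => _ [b fx_b <-]; rewrite leeBlDr //.
have : phi f zs y < (- zs b + a')%:E.
  apply: (le_lt_trans phi_y); apply: (@le_lt_trans _ _ ((- zs b)%:E + a%:E)).
    by apply: leeD2r; apply: ereal_inf_lbound; exists b.
  by rewrite -EFinD lte_fin ltrD2l.
case/ereal_inf_lt => _ [c fy_c <-]; rewrite lte_fin => zs_c.
apply: (@le_trans _ _ (- zs (l *: c + (1 - l) *: b))%:E).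
  apply: ereal_inf_lbound; exists (l *: c + (1 - l) *: b)%R => //.
  apply: f_convex; first by rewrite l0 l1.
  apply: subset_closure; exists (l *: c)%R, ((1 - l) *: b)%R.
  by split; [exists c | split => //; exists b].
rewrite -EFinD lee_fin dualD // !dualZ //; nra.
Qed.

Lemma phi_dquot_lt_mono f zs x u (s t c : R) : set_convex f -> is_dual zs ->
  (0 < s < t)%R -> phi_dquot f zs x u t < c%:E -> phi_dquot f zs x u s < c%:E.
Proof.
move=> f_convex hd /andP[s0 st].
have t0 : (0 < t)%R by apply: lt_trans st.
case/(lte_invMl t0)/ediff_lt => a a_lt phi_t.
pose l := (s / t)%R; pose a' := ((a + t * c) / 2)%R.
have l01 : (0 < l < 1)%R by rewrite divr_gt0 //= ltr_pdivrMr // mul1r.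
have xs : (x + s *: u = l *: (x + t *: u) + (1 - l) *: x)%R.
  have lt : (l * t = s)%R by rewrite /l divfK // gt_eqF.
  by rewrite scalerDr scalerA lt addrAC -scalerDl [(l + _)%R]addrC subrK scale1r.
have phi_s : phi f zs (x + s *: u) <= phi f zs x + (l * a')%:E.
  by rewrite xs; apply: phi_convex_shift phi_t => //; rewrite /a'; lra.
apply: (@le_lt_trans _ _ (s^-1 * (l * a'))%R%:E).
  rewrite EFinM; apply: lee_wpmul2l; first by rewrite lee_fin invr_ge0 ltW.
  exact: ediff_le.
have -> : (s^-1 * (l * a') = a' / t)%R by rewrite /l; field; rewrite ?gt_eqF.
by rewrite lte_fin ltr_pdivrMr // /a'; lra.
Qed.

Lemma sdquot_fscal f zs x u (t : R) z : is_dual zs -> (0 < t)%R ->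
  phi_dquot f zs x u t < (- zs z)%:E -> sdquot (fscal f zs) x u t z.
Proof.
move=> hd t0 /(lte_invMl t0)/ediff_lt [a a_lt phi_t].
exists (t *: z); last by rewrite scalerA mulVf ?gt_eqF // scale1r.
move=> b fscal_b; rewrite /fscal /= in fscal_b *.
apply: (le_trans phi_t); apply: (le_trans (leeD2r _ fscal_b)).
by rewrite -EFinD lee_fin dualD // dualZ //; lra.
Qed.

Lemma open_halfspace_sub_sdquots f zs x u (t0 : R) : set_convex f -> is_dual zs ->
  phi_dir f zs x u <= 0 -> (0 < t0)%R ->
  [set z | (0 < - zs z)%R] `<=`
    \bigcup_(t in [set t | (0 < t < t0)%R]) sdquot (fscal f zs) x u t.
Proof.
move=> f_convex hd phi_dir_le0 t0_gt0 z /= zs_z.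
have : phi_dir f zs x u < (- zs z)%:E by apply: le_lt_trans phi_dir_le0 _.
case/ereal_inf_lt => _ [t /= t_gt0 <-] phi_t.
have [t0_lt|t_le] := ltP (t0 / 2)%R t.
  have t0_half : (0 < t0 / 2)%R by rewrite divr_gt0.
  exists (t0 / 2)%R; first by rewrite /= t0_half; lra.
  by apply: sdquot_fscal => //; apply: (phi_dquot_lt_mono f_convex hd _ phi_t);
    rewrite t0_half t0_lt.
by exists t; [rewrite /= t_gt0; lra | exact: sdquot_fscal].
Qed.

Lemma sdir_fscal0 f zs x u : set_convex f -> is_dual zs -> zs <> (fun=> 0%R) ->
  phi_dir f zs x u <= 0 -> sdir (fscal f zs) x u 0%R.
Proof.
move=> f_convex hd zs_nz phi_dir_le0 t0 /= t0_gt0.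
apply: (closureS _ (closure_open_halfspace0 hd zs_nz)).
move=> z /(open_halfspace_sub_sdquots f_convex hd phi_dir_le0 t0_gt0) z_in B.
by case=> _; apply.
Qed.

End Stampacchia.

Unset Implicit Arguments.

Theorem mainTheorem12 (R : realType) (X : lmodType R) (Z : tvsType R)
  (C : set Z) (f : X -> set Z) (x0 : X) :
  hausdorff_space Z ->
  closed_convex_cone C -> C 0 ->
  negdual_nz C !=set0 ->
  (forall x, inG C (f x)) ->
  set_convex f ->
  dom f x0 ->
  (scalar_stampacchia C f x0 -> setvalued_stampacchia f x0) /\
  (weak_regular C f ->
     (setvalued_stampacchia f x0 <-> scalar_stampacchia C f x0)).
Proof.
move=> _ _ _ _ _ f_convex _.
have scalar_setvalued : scalar_stampacchia C f x0 -> setvalued_stampacchia f x0.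
  case=> [fx0T|scalar]; [by left | right] => x dom_x fx_neq sdir0.
  have [zs [hd _] phi_dir_gt0] := scalar x dom_x fx_neq.
  move: (phi_dir_le_sdir hd sdir0); rewrite dual0 // oppr0.
  by rewrite leNgt phi_dir_gt0.
split => // regular; split => //.
case=> [fx0T|setvalued]; [by left | right] => x dom_x fx_neq.
apply: contrapT => no_zs; apply: (setvalued x dom_x fx_neq).
rewrite regular => zs zs_negdual; have [hd [_ zs_nz]] := zs_negdual.
apply: sdir_fscal0 => //; rewrite leNgt; apply/negP => phi_dir_gt0.
by apply: no_zs; exists zs.
Qed.
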